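(* Let $\Gamma$ be a semigroup with identity $e$, $V$ a finite-dimensional complex vector space, and $\rho:\Gamma\to\mathrm{End}(V)$ a reducible endomorphism action with $\rho(e)=\mathrm{Id}$ and generalized weights $\lambda_1,\dots,\lambda_k$. Then $\rho$ is expansive if and only if for each $i=1,\dots,k$ the image $\lambda_i(\Gamma)$ is an unbounded subset of $\mathbb C$.
   Context: A character of $\Gamma$ is a semigroup homomorphism $\lambda:\Gamma\to(\mathbb C,\cdot)$. An action $\rho:\Gamma\to\mathrm{End}(V)$ is reducible if there are characters $\lambda_1,\dots,\lambda_k$ and nontrivial $\rho(\Gamma)$-invariant subspaces $V_1,\dots,V_k$ with $V=V_1\oplus\cdots\oplus V_k$ such that for each $i$ there is a basis of $V_i$ with respect to which $\rho(\gamma)|_{V_i}-\lambda_i(\gamma)I$ is strictly upper triangular for all $\gamma\in\Gamma$; the $\lambda_i$ are the generalized weights. The action is expansive (on $V$ as an additive topological group) if there is a neighborhood $U$ of $0$ with $\bigcap_{\gamma}\rho(\gamma)^{-1}(U)=\{0\}$. *)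

From HB Require Import structures.
From mathcomp Require Import all_boot all_order all_algebra.
From mathcomp Require Import reals.
From mathcomp Require Import complex.
Set Implicit Arguments. Unset Strict Implicit. Unset Printing Implicit Defensive.
Import Order.TTheory GRing.Theory Num.Theory.
Local Open Scope ring_scope.

Definition is_monoid (G : Type) (op : G -> G -> G) (e : G) : Prop :=
  (forall a b c, op a (op b c) = op (op a b) c) /\
  (forall a, op e a = a) /\ (forall a, op a e = a).

Definition is_character (R : realType) (G : Type) (op : G -> G -> G)
  (lam : G -> R[i]) : Prop :=
  forall a b, lam (op a b) = lam a * lam b.

(* An endomorphism action of Gamma on V = C^n (column vectors, endomorphisms
   = n x n matrices acting on the left): a semigroup homomorphism
   Gamma -> (End V, composition). *)
Definition is_action (R : realType) (G : Type) (op : G -> G -> G) (n : nat)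
  (rho : G -> 'M[R[i]]_n) : Prop :=
  forall a b, rho (op a b) = rho a *m rho b.

Definition strictly_upper (F : Type) (F0 : F) (d : nat) (M : 'M[F]_d) : Prop :=
  forall r c : 'I_d, (c <= r)%N -> M r c = F0.

(* rho is reducible with generalized weights lam_0,...,lam_(k-1):
   there are nontrivial subspaces V_i (V_i = column span of B i, whose d i
   columns form a basis of V_i, d i > 0) with V = V_0 (+) ... (+) V_(k-1)
   (every vector is uniquely a sum of elements of the V_i), each V_i is
   rho(Gamma)-invariant and, in the basis given by the columns of B i, the
   matrix T of rho(gamma)|V_i (i.e. rho gamma *m B i = B i *m T) satisfies
   T - lam i gamma I strictly upper triangular; the lam i are characters. *)
Definition reducible_with (R : realType) (G : Type) (op : G -> G -> G)
  (n : nat) (rho : G -> 'M[R[i]]_n) (k : nat) (lam : 'I_k -> G -> R[i]) :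
  Prop :=
  (forall i, is_character op (lam i)) /\
  exists (d : 'I_k -> nat) (B : forall i, 'M[R[i]]_(n, d i)),
    (forall i, (0 < d i)%N) /\
    (forall v : 'cV[R[i]]_n,
        exists c : forall i, 'cV[R[i]]_(d i), v = \sum_i B i *m c i) /\
    (forall c : forall i, 'cV[R[i]]_(d i),
        \sum_i B i *m c i = 0 -> forall i, c i = 0) /\
    (forall i (g : G), exists T : 'M[R[i]]_(d i),
        rho g *m B i = B i *m T /\
        strictly_upper 0 (T - (lam i g)%:M)).

(* Neighborhoods of 0 in V = C^n for its standard (product / Euclidean)
   topology: sets containing some polydisc {v | forall j, |v_j| < eps}. *)
Definition nbhd0 (R : realType) (n : nat) (U : 'cV[R[i]]_n -> Prop) : Prop :=
  exists eps : R, 0 < eps /\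
    forall v : 'cV[R[i]]_n, (forall j, Normc.normc (v j 0) < eps) -> U v.

Definition expansive (R : realType) (G : Type) (n : nat)
  (rho : G -> 'M[R[i]]_n) : Prop :=
  exists U : 'cV[R[i]]_n -> Prop, nbhd0 U /\
    forall v : 'cV[R[i]]_n, (forall g : G, U (rho g *m v)) <-> v = 0.

Definition bounded_image (R : realType) (G : Type) (f : G -> R[i]) : Prop :=
  exists M : R, forall g : G, Normc.normc (f g) <= M.

(** A weight [lam i] contributes an eigenvector (the first basis vector of
    [V_i]); if [lam i] is bounded, small multiples of it never leave a given
    polydisc, so [rho] is not expansive.  Conversely, let [v != 0] have a
    nonzero component [c] in some [V_i], and let [m] be the last nonzero
    coordinate of [c].  By triangularity the [m]-th coordinate of the
    [V_i]-component of [rho g v] is [lam i g * c_m], while the coordinates of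
    the direct-sum decomposition depend linearly, hence boundedly, on the
    vector.  So if [rho g v] stays in the unit polydisc for all [g], then
    [lam i] is bounded. *)
From HB Require Import structures.
From mathcomp Require Import all_boot all_order all_algebra.
From mathcomp Require Import reals.
From mathcomp Require Import complex.
From mathcomp Require Import lra.
From Stdlib Require Import ClassicalEpsilon.
Set Implicit Arguments. Unset Strict Implicit. Unset Printing Implicit Defensive.
Import Order.TTheory GRing.Theory Num.Theory.
Local Open Scope ring_scope.
Local Open Scope complex_scope.

Section Normc.
Variable R : rcfType.
Implicit Types x : R[i].

Lemma normcE x : `|x| = (Normc.normc x)%:C.
Proof. by case: x. Qed.

Lemma normc_ge0 x : 0 <= Normc.normc x.
Proof. by case: x => a b; rewrite /Normc.normc sqrtr_ge0. Qed.

Lemma normc_real (a : R) : Normc.normc a%:C = `|a|.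
Proof. by rewrite /Normc.normc /= expr0n /= addr0 sqrtr_sqr. Qed.

Lemma normc_gt0 x : x != 0 -> 0 < Normc.normc x.
Proof.
move=> x0; rewrite lt_def normc_ge0 andbT.
by apply: contra x0 => /eqP/Normc.eq0_normc ->.
Qed.

Lemma normc_sum_le (I : finType) (F : I -> R[i]) :
  Normc.normc (\sum_i F i) <= \sum_i Normc.normc (F i).
Proof.
rewrite -lecR -normcE raddf_sum /=.
by apply: le_trans (ler_norm_sum _ _ _) _; apply: ler_sum => i _; rewrite normcE.
Qed.

End Normc.

Section Triangular.
Variables (R : pzRingType) (d : nat) (T : 'M[R]_d) (l : R).
Hypothesis T_upper : strictly_upper 0 (T - l%:M).

Lemma strictly_upper_subE (r c : 'I_d) : (c <= r)%N -> T r c = l *+ (r == c).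
Proof.
move=> le_cr; move: (T_upper le_cr); rewrite !mxE => /eqP.
by rewrite subr_eq0 => /eqP.
Qed.

Lemma triangular_mul_delta0 (j0 : 'I_d) :
  j0 = 0%N :> nat -> T *m delta_mx j0 (0 : 'I_1) = l *: delta_mx j0 0.
Proof.
move=> j0_0; apply/matrixP => r c; rewrite (ord1 c) !mxE.
rewrite (bigD1 j0) //= big1 => [|j j_neq]; last by rewrite !mxE (negbTE j_neq) mulr0.
rewrite !mxE !eqxx mulr1 addr0 strictly_upper_subE ?j0_0 //.
by case: (r == j0); rewrite ?mulr1 ?mulr0.
Qed.

Lemma triangular_mul_last_coord (c : 'cV[R]_d) (m : 'I_d) :
  (forall r : 'I_d, (m < r)%N -> c r 0 = 0) -> (T *m c) m 0 = l * c m 0.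
Proof.
move=> c_after_m; rewrite mxE (bigD1 m) //= big1 ?addr0 => [|r r_neq_m].
  by rewrite strictly_upper_subE // eqxx mulr1n.
case: (ltngtP r m) => [lt_rm|lt_mr|/val_inj eq_rm].
- by rewrite strictly_upper_subE 1?ltnW // eq_sym (negbTE r_neq_m) mul0r.
- by rewrite c_after_m // mulr0.
- by rewrite eq_rm eqxx in r_neq_m.
Qed.

End Triangular.

Lemma last_nonzero_coord (R : nzRingType) (d : nat) (c : 'cV[R]_d) :
  c != 0 -> exists m : 'I_d,
    c m 0 != 0 /\ forall r : 'I_d, (m < r)%N -> c r 0 = 0.
Proof.
move=> c_neq0.
have [r0 cr0] : exists r, c r 0 != 0.
  apply/existsP; apply: contraR c_neq0 => /existsPn c0.
  by apply/eqP/matrixP => r j; rewrite (ord1 j) mxE; apply/eqP/negPn.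
case: (@arg_maxnP _ r0 (fun r => c r 0 != 0) (fun r : 'I_d => r : nat) cr0).
move=> m cm m_max.
exists m; split=> // r lt_mr.
by apply/eqP/negPn/negP => /m_max /=; rewrite leqNgt lt_mr.
Qed.

Section DirectSum.
Variables (R : realType) (n k : nat) (d : 'I_k -> nat).
Variable B : forall i, 'M[R[i]]_(n, d i).
Hypothesis B_span : forall v : 'cV[R[i]]_n,
  exists c : forall i, 'cV_(d i), v = \sum_i B i *m c i.
Hypothesis B_free : forall c : forall i, 'cV[R[i]]_(d i),
  \sum_i B i *m c i = 0 -> forall i, c i = 0.

Implicit Types v : 'cV[R[i]]_n.

Definition dsum_coord v : forall i, 'cV_(d i) :=
  proj1_sig (constructive_indefinite_description _ (B_span v)).

Lemma dsum_coordK v : v = \sum_i B i *m dsum_coord v i.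
Proof. exact: proj2_sig (constructive_indefinite_description _ (B_span v)). Qed.

Lemma dsum_coord_unique v (c : forall i, 'cV_(d i)) :
  v = \sum_i B i *m c i -> forall i, dsum_coord v i = c i.
Proof.
move=> v_sum i; apply/eqP; rewrite -subr_eq0; apply/eqP.
apply: (@B_free (fun i => dsum_coord v i - c i)).
rewrite (eq_bigr _ (fun i _ => mulmxBr _ _ _)) sumrB -v_sum -dsum_coordK.
exact: subrr.
Qed.

Lemma dsum_coord_expand v i :
  dsum_coord v i = \sum_j v j 0 *: dsum_coord (delta_mx j 0) i.
Proof.
apply: (@dsum_coord_unique v (fun i => \sum_j v j 0 *: dsum_coord (delta_mx j 0) i)).
rewrite [LHS]matrix_sum_delta.
under eq_bigr => j _ do rewrite big_ord1 (dsum_coordK (delta_mx j 0)) scaler_sumr.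
rewrite exchange_big /=; apply: eq_bigr => l _.
by rewrite mulmx_sumr; apply: eq_bigr => j _; rewrite scalemxAr.
Qed.

Lemma dsum_coord_bound v i r :
  (forall j, Normc.normc (v j 0) <= 1) ->
  Normc.normc (dsum_coord v i r 0)
    <= \sum_j Normc.normc (dsum_coord (delta_mx j 0) i r 0).
Proof.
move=> v_le1; rewrite dsum_coord_expand summxE.
apply: le_trans (normc_sum_le _) _.
apply: ler_sum => j _; rewrite mxE Normc.normcM ler_piMl ?normc_ge0 //.
Qed.

Lemma dsum_coord_mul (M : 'M_n) (T : forall i, 'M_(d i)) :
  (forall i, M *m B i = B i *m T i) ->
  forall v i, dsum_coord (M *m v) i = T i *m dsum_coord v i.
Proof.
move=> MB v; apply: dsum_coord_unique.
rewrite {1}(dsum_coordK v) mulmx_sumr; apply: eq_bigr => i _.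
by rewrite !mulmxA MB.
Qed.

Lemma dsum_mul_delta_neq0 i (j : 'I_(d i)) : B i *m delta_mx j (0 : 'I_1) != 0.
Proof.
apply/eqP => Bj0.
pose c l : 'cV[R[i]]_(d l) := \col_r ((l == i) && (r == j :> nat))%:R.
have ci : c i = delta_mx j 0.
  by apply/matrixP => r s; rewrite (ord1 s) !mxE eqxx andbT.
have /B_free/(_ i) : \sum_l B l *m c l = 0.
  rewrite (bigD1 i) //= ci Bj0 add0r big1 // => l /negbTE l_neq.
  suff -> : c l = 0 by rewrite mulmx0.
  by apply/matrixP => r s; rewrite !mxE l_neq.
by rewrite ci => /matrixP/(_ j 0); rewrite !mxE !eqxx => /eqP; rewrite oner_eq0.
Qed.

Variables (G : Type) (rho : G -> 'M[R[i]]_n) (lam : 'I_k -> G -> R[i]).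
Hypothesis B_triangular : forall i g, exists T : 'M_(d i),
  rho g *m B i = B i *m T /\ strictly_upper 0 (T - (lam i g)%:M).

Lemma weight_eigenvector i : (0 < d i)%N ->
  exists2 w : 'cV[R[i]]_n, w != 0 & forall g, rho g *m w = lam i g *: w.
Proof.
move=> d_gt0; pose j0 := Ordinal d_gt0.
exists (B i *m delta_mx j0 0); first exact: dsum_mul_delta_neq0.
move=> g; have [T [BT T_upper]] := B_triangular i g.
by rewrite mulmxA BT -mulmxA (triangular_mul_delta0 T_upper) // scalemxAr.
Qed.

Lemma unbounded_weights_expansive :
  (forall i, ~ bounded_image (lam i)) -> expansive rho.
Proof.
move=> lam_unbounded.
exists (fun v => forall j, Normc.normc (v j 0) < 1); split.
  by exists 1; split=> // v; rewrite ltr01.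
move=> v; split=> [v_orbit|-> g j]; last by rewrite mulmx0 mxE Normc.normc0 ltr01.
apply/eqP; apply: contraT => v_neq0.
have [i ci_neq0] : exists i, dsum_coord v i != 0.
  apply/existsP; apply: contraR v_neq0 => /existsPn coord0.
  by rewrite (dsum_coordK v) big1 // => i _; rewrite (eqP (negPn (coord0 i))) mulmx0.
have [m [cm_neq0 c_after_m]] := last_nonzero_coord ci_neq0.
pose K := \sum_j Normc.normc (dsum_coord (delta_mx j 0) i m 0).
case: (lam_unbounded i); exists (K / Normc.normc (dsum_coord v i m 0)) => g.
rewrite ler_pdivlMr ?normc_gt0 // -Normc.normcM.
have [T T_spec] : exists T : forall l, 'M_(d l), forall l,
    rho g *m B l = B l *m T l /\ strictly_upper 0 (T l - (lam l g)%:M).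
  exists (fun l => proj1_sig (constructive_indefinite_description _ (B_triangular l g))).
  by move=> l; exact: proj2_sig (constructive_indefinite_description _ (B_triangular l g)).
rewrite -(triangular_mul_last_coord (T_spec i).2 c_after_m).
rewrite -(dsum_coord_mul (fun l => (T_spec l).1)).
by apply: dsum_coord_bound => j; exact/ltW/v_orbit.
Qed.

End DirectSum.

Lemma bounded_eigenvector_not_expansive (R : realType) (G : Type) (n : nat)
    (rho : G -> 'M[R[i]]_n) (f : G -> R[i]) (w : 'cV[R[i]]_n) :
  w != 0 -> (forall g, rho g *m w = f g *: w) -> bounded_image f ->
  ~ expansive rho.
Proof.
move=> w_neq0 w_eigen [M f_le] [U [[eps [eps_gt0 U_polydisc]] U_expansive]].
pose W := \sum_j Normc.normc (w j 0).
have w_le_W j : Normc.normc (w j 0) <= W.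
  by rewrite /W (bigD1 j) //= lerDl sumr_ge0 // => l _; exact: normc_ge0.
have W_ge0 : 0 <= W by apply: sumr_ge0 => j _; exact: normc_ge0.
pose K := (`|M| + 1) * (W + 1).
have K_gt0 : 0 < K by have := normr_ge0 M; rewrite /K => ?; apply: mulr_gt0; lra.
pose t := eps / K.
have t_gt0 : 0 < t by exact: divr_gt0.
have tw_neq0 : t%:C *: w != 0.
  rewrite scaler_eq0 negb_or w_neq0 andbT.
  by apply/eqP => /(congr1 (@complex.Re R)) /=; lra.
apply/(negP tw_neq0)/eqP/(U_expansive _).1 => g; apply: U_polydisc => j.
rewrite -scalemxAr w_eigen scalerA mxE !Normc.normcM normc_real ger0_norm ?ltW //.
have fw_lt_K : Normc.normc (f g) * Normc.normc (w j 0) < K.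
  have := f_le g; have := normc_ge0 (f g); have := normc_ge0 (w j 0).
  have := w_le_W j; have := ler_norm M; rewrite /K; nra.
by rewrite -mulrA -[eps](divfK (lt0r_neq0 K_gt0)) ltr_pM2l // -/t.
Qed.

Theorem proposition2p3 (R : realType) (G : Type) (op : G -> G -> G) (e : G)
  (n : nat) (rho : G -> 'M[R[i]]_n) (k : nat) (lam : 'I_k -> G -> R[i]) :
  is_monoid op e ->
  is_action op rho ->
  rho e = 1%:M ->
  reducible_with op rho lam ->
  (expansive rho <-> forall i : 'I_k, ~ bounded_image (lam i)).
Proof.
move=> _ _ _ [_ [d [B [d_gt0 [B_span [B_free B_triangular]]]]]].
split=> [rho_expansive i lam_bounded|]; last first.
  exact: (unbounded_weights_expansive B_span B_free B_triangular).
have [w w_neq0 w_eigen] := weight_eigenvector B_free B_triangular (d_gt0 i).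
exact: bounded_eigenvector_not_expansive w_neq0 w_eigen lam_bounded rho_expansive.
Qed.
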